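(* Let $p_1,\dots,p_n$ be $n$ distinct prime numbers, let $X$ be a set with $|X|=p_1\cdots p_n$, and let $G$ be a solvable transitive subgroup of $\mathrm{Sym}_X$. Then there exist $\sigma\in\mathrm{Sym}_n$ and normal subgroups $$\{1\}=K_0\subseteq T_1\subseteq K_1\subseteq T_2\subseteq K_2\subseteq\cdots\subseteq T_n\subseteq K_n=G$$ of $G$ such that for every $i=1,\dots,n$: (i) $K_i/K_{i-1}$ is isomorphic to a subgroup of $\left(\mathbb Z/(p_{\sigma(i)})\rtimes \mathrm{Aut}(\mathbb Z/(p_{\sigma(i)}))\right)^{m_i}$ with $m_i=\frac{p_1\cdots p_n}{p_{\sigma(1)}\cdots p_{\sigma(i)}}$, $p_{\sigma(i)}$ divides $|K_i/K_{i-1}|$, and $T_i/K_{i-1}$ is the Sylow $p_{\sigma(i)}$-subgroup of $K_i/K_{i-1}$; (ii) $K_i=\{g\in G : g(T_i(x))=T_i(x)\text{ for all }x\in X\}$, where $T_i(x)=\{t(x): t\in T_i\}$; (iii) $\mathcal S_i=\{K_i(x): x\in X\}$ (where $K_i(x)=\{g(x):g\in K_i\}$) is a system of imprimitivity of $G$ and $|\mathcal S_i|=\frac{p_1\cdots p_n}{p_{\sigma(1)}\cdots p_{\sigma(i)}}$.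
   Context: Here $\mathbb Z/(p)\rtimes\mathrm{Aut}(\mathbb Z/(p))$ is the holomorph of the cyclic group of order $p$ (the semidirect product with the natural action), and a power $H^m$ denotes the direct product of $m$ copies of $H$. A system of imprimitivity of a permutation group $G\le\mathrm{Sym}_X$ is a partition of $X$ into blocks such that each element of $G$ maps every block onto a block. *)

From HB Require Import structures.
From mathcomp Require Import all_boot all_algebra all_fingroup all_solvable.
Set Implicit Arguments. Unset Strict Implicit. Unset Printing Implicit Defensive.

Definition holomorph (p : nat) : finGroupType :=
  sdprod_by (aut_groupAction (Zp p)).

Definition gpower (H : finGroupType) (m : nat) : finGroupType :=
  {dffun forall i : 'I_m, H}.

Definition porb (X : finType) (A : {set {perm X}}) (x : X) : {set X} :=
  [set fun_of_perm a x | a in A].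

Definition pimage (X : finType) (g : {perm X}) (B : {set X}) : {set X} :=
  [set fun_of_perm g y | y in B].

Definition system_of_imprimitivity (X : finType) (G : {set {perm X}})
    (S : {set {set X}}) : bool :=
  partition S [set: X] && [forall g in G, forall B in S, pimage g B \in S].

Definition porbs (X : finType) (A : {set {perm X}}) : {set {set X}} :=
  [set porb A x | x in [set: X]].

From mathcomp Require Import all_boot all_algebra all_fingroup all_solvable.
Set Implicit Arguments. Unset Strict Implicit. Unset Printing Implicit Defensive.
Local Open Scope group_scope.

(* Call a normal subgroup K of G block-closed with orbit
   size d when K equals its block kernel (the elements of G fixing every
   K-orbit) and all K-orbits have d points.  Starting from K_0 = 1, we climb:
   given a proper block-closed K, a minimal normal subgroup M/K of G/K is an
   elementary abelian q-group; each M-orbit is a union of q^a K-orbits, and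
   square-freeness of |X| forces a = 1 and q not dividing d.  The block kernel
   K' of M is then block-closed with orbit size d q; acting on the q K-orbits
   inside each M-orbit, K'/K embeds into a power of Z/(q) ⋊ Aut(Z/(q)), whose
   q-core is a Sylow subgroup; its preimage T has block kernel K'. *)

Section SquareFreeProducts.
Local Close Scope group_scope.
Variables (n : nat) (p : 'I_n -> nat).
Hypotheses (p_prime : forall i, prime (p i)) (p_inj : injective p).

Lemma prod_primes_gt0 (s : seq 'I_n) : 0 < \prod_(k <- s) p k.
Proof. by apply: prodn_gt0 => k; apply: prime_gt0. Qed.

Lemma logn_prod_primes r : prime r -> logn r (\prod_(k < n) p k) <= 1.
Proof.
move=> r_pr.
have [_ ->] : 0 < \prod_(k < n) p k /\
              logn r (\prod_(k < n) p k) = \sum_(k < n) (r == p k).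
  apply: (big_rec2 (fun a b => 0 < a /\ logn r a = b)); first by rewrite logn1.
  move=> k a b _ [a_gt0 <-]; split; first by rewrite muln_gt0 prime_gt0.
  by rewrite lognM ?(prime_gt0 (p_prime k)) // (logn_prime r (p_prime k)).
case: (pickP (fun k => p k == r)) => [k0 /eqP pk0|none].
  rewrite (bigD1 k0) //= big1 ?addn0 ?leq_b1 // => k ne_k_k0.
  by rewrite -pk0 (inj_eq p_inj) eq_sym (negbTE ne_k_k0).
by rewrite big1 // => k _; rewrite eq_sym none.
Qed.

Lemma sqfree_prod_primes r : prime r -> ~~ (r ^ 2 %| \prod_(k < n) p k).
Proof.
move=> r_pr; rewrite pfactor_dvdn ?prod_primes_gt0 // -ltnNge ltnS.
exact: logn_prod_primes.
Qed.

Lemma prime_dvd_prod_primes q :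
  prime q -> q %| \prod_(k < n) p k -> exists k, q = p k.
Proof.
move=> q_pr; rewrite Euclid_dvd_prod //.
elim/big_rec: _ => [//|k b _ IH]; case/orP => [|/IH //].
by rewrite dvdn_prime2 // => /eqP ->; exists k.
Qed.

Lemma prod_uniq_split (s : seq 'I_n) : uniq s ->
  \prod_(k < n) p k = \prod_(k <- s) p k * \prod_(k < n | k \notin s) p k.
Proof. by move=> s_uniq; rewrite (big_uniq _ s_uniq) (bigID (mem s)). Qed.

Lemma prod_uniq_lt (s : seq 'I_n) :
  uniq s -> size s < n -> \prod_(k <- s) p k < \prod_(k < n) p k.
Proof.
move=> s_uniq lt_s_n; rewrite (prod_uniq_split s_uniq).
have [k0 k0_s | all_s] := pickP (fun k => k \notin s); last first.
  have := uniq_leq_size (enum_uniq 'I_n) (fun k _ => negbFE (all_s k)).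
  by rewrite size_enum_ord leqNgt lt_s_n.
rewrite -[X in X < _]muln1 ltn_pmul2l ?prod_primes_gt0 // (bigD1 k0) //=.
apply: leq_trans (prime_gt1 (p_prime k0)) (leq_pmulr _ _).
by apply: prodn_gt0 => k; apply: prime_gt0.
Qed.

Lemma prod_uniq_full (s : seq 'I_n) :
  uniq s -> size s = n -> \prod_(k <- s) p k = \prod_(k < n) p k.
Proof.
move=> s_uniq size_s; rewrite (prod_uniq_split s_uniq).
have /subset_cardP all_s : #|s| = #|'I_n| by rewrite (card_uniqP s_uniq) card_ord.
suff -> : \prod_(k < n | k \notin s) p k = 1 by rewrite muln1.
by apply: big_pred0 => k; rewrite (all_s (subset_predT _) k).
Qed.

End SquareFreeProducts.

(* Let W be a group of permutations supported on a q-element set Om and C an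
   abelian normal subgroup of W acting transitively on Om.  Then C is regular
   (cyclic of order q), the stabiliser S of a point w0 is a complement to C,
   and S acts faithfully on C by conjugation, so that W embeds into the
   holomorph Z/(q) ⋊ Aut(Z/(q)). *)
Section HolomorphEmbedding.
Variables (Y : finType) (q : nat) (Om : {set Y}) (W C : {group {perm Y}}) (w0 : Y).
Hypotheses (q_pr : prime q) (card_Om : #|Om| = q)
  (W_on : forall w, w \in W -> perm_on Om w) (sCW : C \subset W)
  (nCW : W \subset 'N(C)) (cCC : abelian C) (orbit_C : orbit 'P C w0 = Om).

Lemma centralising_fix_trivial u :
  u \in W -> (forall c, c \in C -> commute c u) -> u w0 = w0 -> u = 1.
Proof.
move=> Wu cCu uw0; apply/permP => y; rewrite perm1.
have [|y_Om] := boolP (y \in Om); last exact: out_perm (W_on Wu) y_Om.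
rewrite -orbit_C => /orbitP[c Cc <-] /=.
by rewrite -permM cCu // permM uw0.
Qed.

Let S := 'C_W[w0 | 'P].

Lemma stabilizer_norm : S \subset 'N(C).
Proof. by rewrite subIset ?nCW. Qed.

(* The abelian transitive group C acts regularly, hence meets S trivially. *)
Lemma regular_stabilizer_tI : C :&: S = 1.
Proof.
apply/trivgP/subsetP => c /setIP[Cc /setIP[_ /astab1P /= cw0]].
apply/set1P; apply: centralising_fix_trivial cw0; first exact: subsetP sCW c Cc.
by move=> d Cd; apply: (centsP cCC).
Qed.

Lemma card_regular : #|C| = q.
Proof.
rewrite -card_Om -orbit_C card_orbit.
suff -> : 'C_C[w0 | 'P] = 1 by rewrite indexg1.
apply/trivgP; rewrite -regular_stabilizer_tI; apply/subsetP => c /setIP[Cc cw0].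
by rewrite inE Cc inE (subsetP sCW).
Qed.

(* Frattini-type factorisation: W = C ⋊ S. *)
Lemma regular_stabilizer_sdprod : C ><| S = W.
Proof.
rewrite sdprodE ?regular_stabilizer_tI ?stabilizer_norm //; apply/eqP; rewrite eqEsubset.
rewrite mul_subG ?sCW ?subsetIl //= -(normC stabilizer_norm); apply/subsetP => w Ww.
have: w w0 \in orbit 'P C w0.
  by rewrite orbit_C (perm_closed _ (W_on Ww)) -orbit_C orbit_refl.
case/orbitP => c Cc /= cw0; rewrite -(mulgKV c w) mem_mulg //.
apply/setIP; split; first by rewrite groupM ?groupV ?(subsetP sCW c Cc).
apply/astab1P.
by rewrite /= /aperm permM -cw0 /aperm -permM mulgV perm1.
Qed.

Lemma stabilizer_conj_aut_inj : {in S &, injective (conj_aut C)}.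
Proof.
move=> x y Sx Sy e_xy.
have Nx := subsetP stabilizer_norm x Sx; have Ny := subsetP stabilizer_norm y Sy.
have Sxy : x * y^-1 \in S by rewrite groupM ?groupV.
have : x * y^-1 \in 'ker (conj_aut C).
  by apply/kerP; rewrite ?groupM ?groupV // morphM ?groupV // morphV //= e_xy mulgV.
rewrite ker_conj_aut => /centP cxy; case/setIP: Sxy => Wxy /astab1P xy_w0.
have /eqP : x * y^-1 = 1 by apply: centralising_fix_trivial xy_w0 => // c /cxy.
by rewrite mulg_eq1 ?groupV // invgK => /eqP.
Qed.

(* Identify C with Z/(q) and map s in S to the automorphism of Z/(q) induced
   by conjugation by s; these combine into an injective morphism of C ⋊ S. *)
Lemma sub_holomorph : exists L : {group holomorph q}, W \isog L.
Proof.
have [f injf imf] : exists2 f : {morphism C >-> 'Z_q}, 'injm f & f @* C = Zp q.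
  apply/isogP; rewrite isog_cyclic_card; last by rewrite prime_cyclic ?card_regular.
  by rewrite prime_cyclic ?card_Zp ?card_regular ?prime_gt0 ?eqxx.
set to := aut_groupAction (Zp q).
have fCZ c : c \in C -> f c \in Zp q by move=> Cc; rewrite -imf mem_morphim.
pose fC c := sdpair1 to (f c).
have fCM : {in C &, {morph fC : x y / x * y}}.
  by move=> x y Cx Cy; rewrite /fC morphM // sdpair1_morphM ?fCZ.
have caut s : s \in 'N(C) -> conj_aut C s \in Aut C.
  by move=> Ns; apply: (subsetP (Aut_conj_aut C 'N(C))); rewrite mem_morphim.
pose al s := Aut_isom injf (subxx C) (conj_aut C s).
have alA s : al s \in Aut (Zp q) by rewrite -imf; exact: Aut_Aut_isom.
pose fS s := sdpair2 to (al s).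
have fSM : {in S &, {morph fS : x y / x * y}}.
  move=> x y Sx Sy.
  have Nx := subsetP stabilizer_norm x Sx; have Ny := subsetP stabilizer_norm y Sy.
  by rewrite /fS /al morphM // Aut_isomM ?caut // sdpair2_morphM ?alA.
have act_f : {in C & S, morph_act 'J 'J (Morphism fCM) (Morphism fSM)}.
  move=> c s Cc Ss /=; have Ns := subsetP stabilizer_norm s Ss.
  rewrite /fC /fS -sdpair_act ?fCZ ?alA //; congr (sdpair1 to _).
  by rewrite -[RHS]/(al s (f c)) /al Aut_isomE ?caut // norm_conj_autE.
exists (sdprodm regular_stabilizer_sdprod act_f @* W)%G; apply: sub_isog => //.
rewrite injm_sdprodm; apply/and3P; split.
- apply/injmP => x y Cx Cy /= e; apply: (injmP injf) => //.
  by apply: (injmP (injm_sdpair1 to)); rewrite ?fCZ.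
- apply/injmP => x y Sx Sy /= e; apply: stabilizer_conj_aut_inj => //.
  have Nx := subsetP stabilizer_norm x Sx; have Ny := subsetP stabilizer_norm y Sy.
  apply: (injmP (injm_Aut_isom injf (subxx C))); rewrite ?caut //.
  by apply: (injmP (injm_sdpair2 to)); rewrite ?alA.
- apply/eqP/trivgP; rewrite -(im_sdpair_TI to); apply: setISS.
  + by apply/subsetP => u /morphimP[c _ Cc ->]; rewrite /= /fC mem_morphim ?fCZ.
  + by apply/subsetP => u /morphimP[c _ Cc ->]; rewrite /= /fS mem_morphim ?alA.
Qed.

End HolomorphEmbedding.

Lemma card_holomorph q : prime q -> #|[set: holomorph q]| = (q * q.-1)%N.
Proof.
move=> q_pr; set to := aut_groupAction (Zp q).
rewrite -(sdprod_card (sdprod_sdpair to)) !card_injm ?injm_sdpair1 ?injm_sdpair2 //.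
by rewrite card_Aut_cyclic ?prime_cyclic ?card_Zp ?prime_gt0 // totient_prime.
Qed.

Section HolomorphPower.
Variables (q m : nat).
Hypothesis q_pr : prime q.

Let to := aut_groupAction (Zp q).
Let Z1 := (sdpair1 to @* Zp q)%G.

Definition translations : {set gpower (holomorph q) m} := setXn (fun _ => Z1).

Lemma translations_group_set : group_set translations.
Proof. exact: group_setXn. Qed.
Canonical translations_group := Group translations_group_set.

Lemma card_gpower_holomorph :
  #|[set: gpower (holomorph q) m]| = ((q * q.-1) ^ m)%N.
Proof.
have -> : [set: gpower (holomorph q) m] = setXn (fun _ => [set: holomorph q]).
  by apply/setP => u; rewrite in_setXn inE; symmetry; apply/forallP => i; rewrite inE.
by rewrite cardsXn (eq_bigr (fun _ => q * q.-1)%N) ?prod_nat_const ?card_ord // => i _;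
   rewrite card_holomorph.
Qed.

(* The translations are normal (componentwise) and of q-power order with
   index (q - 1)^m prime to q. *)
Lemma translations_normal : translations <| [set: gpower (holomorph q) m].
Proof.
have nZ1 : Z1 <| [set: holomorph q] by case/sdprod_context: (sdprod_sdpair to).
rewrite /normal subsetT /=; apply/subsetP => a _; rewrite inE.
apply/subsetP => v /imsetP[u Zu ->]; apply/setXnP => i.
rewrite conjgE !mulg_ffun invg_ffun -conjgE memJ_norm; first by move/setXnP: Zu.
by rewrite (subsetP (normal_norm nZ1)) ?inE.
Qed.

Lemma translations_Hall : q.-Hall([set: gpower (holomorph q) m]) translations.
Proof.
have cZ1 : #|Z1| = q by rewrite card_injm ?injm_sdpair1 // card_Zp ?prime_gt0.
have cZ : #|translations| = (q ^ m)%N.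
  by rewrite cardsXn (eq_bigr (fun _ => q)) ?prod_nat_const ?card_ord.
rewrite /pHall subsetT /pgroup cZ pnatX pnat_id //=.
have := Lagrange (subsetT translations_group).
rewrite card_gpower_holomorph /= cZ expnMn => /eqP.
rewrite eqn_pmul2l ?expn_gt0 ?prime_gt0 // => /eqP ->.
have q_gt1 := prime_gt1 q_pr.
by rewrite pnatX p'natE // gtnNdvd // -ltnS prednK // ltnW.
Qed.

Lemma gpower_pcore_Sylow (L : {group gpower (holomorph q) m}) : q.-Sylow(L) ('O_q(L)).
Proof.
have hL := setI_normal_Hall translations_normal translations_Hall (subsetT L).
rewrite (normal_Hall_pcore hL) //= setIC.
exact: normalGI (subsetT L) translations_normal.
Qed.

End HolomorphPower.

Section Orbits.
Variable X : finType.
Implicit Types (A : {set {perm X}}) (H : {group {perm X}}) (g : {perm X}) (x : X).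

Lemma porbE A x : porb A x = orbit 'P A x.
Proof. by []. Qed.

Lemma pimageE g (B : {set X}) : pimage g B = ('P^*)%act B g.
Proof. by []. Qed.

Lemma porb_refl H x : x \in porb H x.
Proof. by rewrite porbE orbit_refl. Qed.

Lemma card_pimage g (B : {set X}) : #|pimage g B| = #|B|.
Proof. by rewrite card_imset //; apply: perm_inj. Qed.

Lemma porb_norm H g x : g \in 'N(H) -> pimage g (porb H x) = porb H (g x).
Proof.
move=> Ng; apply/setP => y; apply/imsetP/imsetP => [[z /imsetP[h Hh ->] ->]|[h Hh ->]].
  by exists (h ^ g); rewrite ?memJ_norm // /conjg !permM permK.
exists ((h ^ g^-1) x); first by apply/imsetP; exists (h ^ g^-1); rewrite ?memJ_norm ?groupV.
by rewrite /conjg invgK !permM permKV.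
Qed.

Lemma porb_act H g x : g \in 'N(H) -> ('P^*)%act (porb H x) g = porb H (g x).
Proof. exact: porb_norm. Qed.

Lemma porb_fix H h x : h \in H -> pimage h (porb H x) = porb H x.
Proof.
move=> Hh; rewrite porb_norm ?(subsetP (normG H)) //.
by rewrite !porbE; apply/orbit_eqP; apply/imsetP; exists h.
Qed.

Lemma porbs_partition H : partition (porbs H) [set: X].
Proof.
by apply: (@orbit_partition _ _ _ 'P H [set: X]); apply/actsP => a _ y; rewrite !inE.
Qed.

End Orbits.

Section BlockKernel.
Variables (X : finType) (G : {group {perm X}}).
Hypothesis transG : [transitive G, on [set: X] | 'P].
Implicit Types (A : {set {perm X}}) (H K T : {group {perm X}}) (g : {perm X}) (x : X).

Lemma transP x y : exists2 g, g \in G & y = g x.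
Proof.
have : y \in orbit 'P G x by rewrite (atransP transG) ?inE.
by case/orbitP => g Gg <-; exists g.
Qed.

Lemma card_porb_const H x y : G \subset 'N(H) -> #|porb H y| = #|porb H x|.
Proof.
move=> nHG; have [g Gg ->] := transP x y.
by rewrite -porb_norm ?(subsetP nHG) // card_pimage.
Qed.

Lemma card_porbs H x : G \subset 'N(H) -> (#|porbs H| * #|porb H x|)%N = #|X|.
Proof.
move=> nHG; rewrite -cardsT (card_partition (porbs_partition H)).
rewrite -sum_nat_const; apply: eq_bigr => B /imsetP[y _ ->].
exact: card_porb_const.
Qed.

Lemma porbs_imprimitivity H :
  G \subset 'N(H) -> system_of_imprimitivity G (porbs H).
Proof.
move=> nHG; rewrite /system_of_imprimitivity porbs_partition /=.
apply/forall_inP => g Gg; apply/forall_inP => B /imsetP[y _ ->].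
by rewrite porb_norm ?(subsetP nHG) //; apply: imset_f; rewrite inE.
Qed.

Definition block_kernel A := 'C_G(porbs A | 'P^*).

Canonical block_kernel_group A := Eval hnf in [group of block_kernel A].

(* The block kernel as it appears in part (ii) of the theorem. *)
Lemma block_kernelE H :
  block_kernel H = [set g in G | [forall x, pimage g (porb H x) == porb H x]].
Proof.
apply/setP => g; apply/setIP/setIdP => [[Gg /astabP fixB]|[Gg /forallP fixB]].
  split=> //; apply/forallP => x; apply/eqP.
  by rewrite pimageE fixB //; apply: imset_f; rewrite inE.
by split=> //; apply/astabP => B /imsetP[x _ ->]; apply/eqP; exact: fixB.
Qed.

Lemma block_kernelP H g x : g \in block_kernel H -> pimage g (porb H x) = porb H x.
Proof. by rewrite block_kernelE inE => /andP[_ /forallP /(_ x) /eqP]. Qed.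

Lemma block_kernel_sub A : block_kernel A \subset G.
Proof. exact: subsetIl. Qed.

Lemma sub_block_kernel H : H \subset G -> H \subset block_kernel H.
Proof.
move=> sHG; rewrite block_kernelE; apply/subsetP => h Hh; rewrite inE (subsetP sHG) //=.
by apply/forallP => x; rewrite porb_fix.
Qed.

Lemma block_kernel_normal H : G \subset 'N(H) -> block_kernel H <| G.
Proof.
move=> nHG; rewrite /block_kernel /normal subsetIl normsI ?normG //.
apply: subset_trans (astab_norm _ _); apply/subsetP => g Gg.
rewrite inE; apply/andP; split; first by rewrite inE.
rewrite inE; apply/subsetP => B /imsetP[y _ ->]; rewrite inE.
by rewrite -pimageE porb_norm ?(subsetP nHG) //; apply: imset_f; rewrite inE.
Qed.

Lemma porb_between H T x :
  H \subset T -> T \subset block_kernel H -> porb T x = porb H x.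
Proof.
move=> sHT sTK; apply/eqP; rewrite eqEsubset; apply/andP; split; last first.
  by apply/subsetP => y /imsetP[h Hh ->]; apply/imsetP; exists h; rewrite ?(subsetP sHT).
apply/subsetP => y /imsetP[t Tt ->].
by rewrite -(block_kernelP x (subsetP sTK t Tt)); apply: imset_f; apply: porb_refl.
Qed.

Lemma porbs_between H T :
  H \subset T -> T \subset block_kernel H -> porbs T = porbs H.
Proof. by move=> sHT sTK; apply: eq_imset => x; apply: porb_between. Qed.

Lemma block_kernel_between H T :
  H \subset T -> T \subset block_kernel H -> block_kernel T = block_kernel H.
Proof. by move=> sHT sTK; rewrite /block_kernel (porbs_between sHT sTK). Qed.

End BlockKernel.

Lemma porbs_representatives (X : finType) (H : {group {perm X}}) m0 :
  #|porbs H| = m0 -> exists xs : 'I_m0 -> X, forall y, exists j, y \in porb H (xs j).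
Proof.
move=> card_H.
have rep j : exists x, enum_val (cast_ord (esym card_H) j) = porb H x.
  by have /imsetP[x _ ->] := enum_valP (cast_ord (esym card_H) j); exists x.
have [xs xsE] := fin_all_exists rep; exists xs => y.
have Hy : porb H y \in porbs H by apply: imset_f; rewrite inE.
exists (cast_ord card_H (enum_rank_in Hy (porb H y))).
by rewrite -xsE cast_ordK enum_rankK_in // porb_refl.
Qed.

(* The K-orbits contained in the M-orbit of x. *)
Definition layer (X : finType) (K M : {set {perm X}}) (x : X) : {set {set X}} :=
  orbit ('P^*) M (porb K x).

Section OrbitSplitting.
Variables (X : finType) (K M : {group {perm X}}) (d : nat).
Hypotheses (sKM : K \subset M) (nKM : M \subset 'N(K))
  (card_K : forall y, #|porb K y| = d).

Lemma layer_partition x : partition (layer K M x) (porb M x).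
Proof.
have act_M m y : m \in M -> ('P^*)%act (porb K y) m = porb K (m y).
  by move=> Mm; rewrite porb_act ?(subsetP nKM).
apply/and3P; split.
- apply/eqP/setP => y; apply/bigcupP/idP.
    case=> B /imsetP[m Mm ->]; rewrite act_M // => /imsetP[k Kk ->].
    by apply/imsetP; exists (m * k); rewrite ?permM // groupM // (subsetP sKM k Kk).
  case/imsetP => m Mm ->; exists (porb K (m x)); last exact: porb_refl.
  by apply/imsetP; exists m; rewrite ?act_M.
- have /and3P[_ tK _] := porbs_partition K; apply: trivIsetS tK.
  by apply/subsetP => B /imsetP[m Mm ->]; rewrite act_M //; apply: imset_f; rewrite inE.
- apply/negP => /imsetP[m Mm e].
  by have := porb_refl K (m x); rewrite -act_M // -e inE.
Qed.

Lemma card_porb_layer x : #|porb M x| = (#|layer K M x| * d)%N.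
Proof.
rewrite (card_partition (layer_partition x)) -sum_nat_const.
by apply: eq_bigr => B /imsetP[m Mm ->]; rewrite porb_act ?(subsetP nKM).
Qed.

Lemma card_layer_dvd x : #|layer K M x| %| #|M : K|.
Proof.
rewrite card_orbit.
have sKS : K \subset 'C_M[porb K x | 'P^*].
  apply/subsetP => k Kk; rewrite inE (subsetP sKM) //=; apply/astab1P.
  by rewrite -pimageE porb_fix.
by rewrite -(Lagrange_index (subsetIl M _) sKS) dvdn_mulr.
Qed.

End OrbitSplitting.

(* Let K ⊆ M be normal subgroups of G, with K equal to its own block kernel
   and M/K abelian, such that each M-orbit is the union of q K-orbits (q prime).
   Each M-orbit contributes a map from the block kernel of M to the permutations
   of its q K-orbits, whose image embeds in the holomorph of Z/(q); together
   they embed (block kernel of M)/K into a power of the holomorph. *)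
Section LayerEmbedding.
Variables (X : finType) (G K M : {group {perm X}}) (q : nat).
Hypotheses (nKG : K <| G) (kerK : block_kernel G K = K) (nMG : M <| G)
  (sKM : K \subset M) (derM : M^`(1) \subset K) (q_pr : prime q)
  (card_layer : forall x, #|layer K M x| = q).

Local Notation KM := (block_kernel G M).

Let sKMG : KM \subset G := block_kernel_sub G M.
Let sMG : M \subset G := normal_sub nMG.
Let sMKM : M \subset KM := sub_block_kernel sMG.
Let nKG' : G \subset 'N(K) := normal_norm nKG.

Lemma layer_act x g : g \in G -> ('P^*)%act (porb K x) g = porb K (g x).
Proof. by move=> Gg; rewrite porb_act ?(subsetP nKG'). Qed.

Definition layer_perm x g : {perm {set X}} :=
  restr_perm (layer K M x) (actperm ('P^*) g).

Lemma layer_perm_K x k : k \in K -> layer_perm x k = 1.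
Proof.
move=> Kk; apply: mker; rewrite ker_restr_perm; apply/astabP => B /imsetP[m Mm ->].
rewrite [X in X = _]/= apermE actpermE layer_act ?(subsetP sMG) //.
by rewrite [RHS]layer_act ?(subsetP sMG) //; exact: porb_fix.
Qed.

Lemma layer_perm_norm x g :
  g \in KM -> actperm ('P^*) g \in 'N(layer K M x | 'P).
Proof.
move=> KMg; have Gg := subsetP sKMG g KMg; rewrite inE; apply/andP; split.
  by rewrite inE.
rewrite inE; apply/subsetP => B /imsetP[m Mm ->]; rewrite inE /= apermE actpermE.
rewrite !layer_act // ?(subsetP sMG m Mm) //.
have : g (m x) \in porb M x.
  by rewrite -(block_kernelP x KMg); apply: imset_f; apply/imsetP; exists m.
by case/imsetP => m' Mm' ->; apply/imsetP; exists m'; rewrite ?layer_act ?(subsetP sMG m' Mm').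
Qed.

Lemma layer_permE x g B :
  g \in KM -> B \in layer K M x -> layer_perm x g B = pimage g B.
Proof. by move=> KMg LB; rewrite /layer_perm restr_permE ?layer_perm_norm // actpermE. Qed.

Lemma layer_permM x : {in KM &, {morph layer_perm x : g h / g * h}}.
Proof.
move=> g h KMg KMh; rewrite /layer_perm actpermM ?inE //.
by rewrite (morphM (restr_perm_morphism _)) ?layer_perm_norm.
Qed.

Canonical layer_morphism x := Morphism (layer_permM x).

(* The permutation group induced on one layer is a subgroup of the holomorph:
   M/K acts on it as an abelian transitive normal subgroup. *)
Lemma layer_image_holomorph x :
  exists psi : {morphism layer_morphism x @* KM >-> holomorph q}, 'injm psi.
Proof.
have [L isoL] : exists L : {group holomorph q}, layer_morphism x @* KM \isog L.
  apply: (@sub_holomorph _ q (layer K M x) _ (layer_morphism x @* M)%G (porb K x)).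
  - exact: q_pr.
  - exact: card_layer.
  - by move=> w /morphimP[g _ KMg ->]; apply: restr_perm_on.
  - exact: morphimS.
  - by apply: morphim_norms; apply: subset_trans sKMG (normal_norm nMG).
  - apply/centsP => a /morphimP[u _ Mu ->] b /morphimP[v _ Mv ->].
    apply/commgP; rewrite -morphR ?(subsetP sMKM) //= layer_perm_K //.
    by rewrite (subsetP derM) // mem_commg.
  - apply/setP => B; apply/imsetP/imsetP => [[c /morphimP[m _ Mm ->] ->]|[m Mm ->]].
      by exists m; rewrite //= apermE (layer_permE (x := x)) ?(subsetP sMKM) // orbit_refl.
    exists (layer_perm x m); first by rewrite mem_morphim ?(subsetP sMKM).
    by rewrite /= apermE (layer_permE (x := x)) ?(subsetP sMKM) // orbit_refl.
by have [psi inj_psi _] := isogP isoL; exists psi.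
Qed.

Lemma layer_perm1 x g y : g \in KM -> layer_perm x g = 1 ->
  y \in porb M x -> pimage g (porb K y) = porb K y.
Proof.
move=> KMg g1 /imsetP[m Mm ->]; have Gm := subsetP sMG m Mm.
have LB : porb K (m x) \in layer K M x by apply/imsetP; exists m; rewrite ?layer_act.
by rewrite -(layer_permE (x := x)) // g1 perm1.
Qed.

(* Collecting one layer per M-orbit embeds the block kernel of M, modulo K,
   into the m0-th power of the holomorph (m0 = number of M-orbits). *)
Lemma layer_embedding m0 : #|porbs M| = m0 ->
  exists F : {morphism KM >-> gpower (holomorph q) m0}, 'ker F = K.
Proof.
move=> card_M; have [xs cover] := porbs_representatives card_M.
have [psi inj_psi] := fin_all_exists (fun j => layer_image_holomorph (xs j)).
pose F g : gpower (holomorph q) m0 := [ffun j => psi j (layer_perm (xs j) g)].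
have FM : {in KM &, {morph F : g h / g * h}}.
  move=> g h KMg KMh; apply/ffunP => j; rewrite mulg_ffun !ffunE.
  by rewrite -morphM ?mem_morphim //= layer_permM.
exists (Morphism FM); apply/setP => g; apply/idP/idP.
  case/morphpreP => KMg /set1P /= Fg1.
  rewrite -kerK block_kernelE inE (subsetP sKMG g KMg) /=; apply/forallP => y.
  have [j yj] := cover y; apply/eqP; apply: layer_perm1 yj => //.
  have := congr1 (fun u : gpower (holomorph q) m0 => u j) Fg1.
  rewrite ffunE oneg_ffun -(morph1 (psi j)) => /(injmP (inj_psi j)).
  by rewrite mem_morphim // group1 => /(_ isT isT).
move=> Kg; have KMg := subsetP sMKM g (subsetP sKM g Kg).
apply/morphpreP; split => //; apply/set1P; apply/ffunP => j.
by rewrite /= ffunE oneg_ffun layer_perm_K // morph1.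
Qed.

End LayerEmbedding.

Lemma minimal_abelian_layer (gT : finGroupType) (G K : {group gT}) :
  solvable G -> K <| G -> K :!=: G ->
  exists q (M : {group gT}),
    [/\ prime q, M <| G, K \subset M, M^`(1) \subset K & q.-group (M / K)]
    /\ ~~ (M \subset K).
Proof.
move=> solG nKG neKG; have [sKG nKG'] := andP nKG.
have ntQ : G / K :!=: 1.
  by apply: contra neKG => /eqP Q1; rewrite eqEsubset sKG /= -(quotient_sub1 nKG') Q1.
have [Mb minMb sMbQ] := minnormal_exists ntQ (normG (G / K)).
have [nMbQ ntMb abMb] := minnormal_solvable minMb sMbQ (quotient_sol K solG).
have q_pr : prime (pdiv #|Mb|) by apply: pdiv_prime; rewrite cardG_gt1.
set M := (coset K @*^-1 Mb)%G.
have MK : M / K = Mb := cosetpreK Mb.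
exists (pdiv #|Mb|), M; split; last first.
  by apply: contra ntMb => sMK; rewrite -MK -subG1 quotient_sub1 ?morphpre_sub.
split=> //.
- by rewrite -(quotientGK nKG) cosetpre_normal /normal sMbQ nMbQ.
- by rewrite -{1}(ker_coset K) ker_sub_pre.
- by apply: der1_min; rewrite ?MK ?(abelem_abelian abMb) ?morphpre_sub.
by rewrite MK (abelem_pgroup abMb).
Qed.

Lemma quotient_injm (aT rT : finGroupType) (H K : {group aT})
    (F : {morphism H >-> rT}) :
  'ker F = K -> exists g : {morphism H / K >-> rT}, 'injm g.
Proof.
move=> kerF; have eK : ('ker F)%G = K by apply: val_inj.
by case: _ / eK; have [g inj_g _] := first_isom F; exists g.
Qed.

Lemma pcore_preimage (gT : finGroupType) (G K M K' : {group gT}) q :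
  K <| G -> M <| G -> K' <| G -> K \subset M -> M \subset K' -> q.-group (M / K) ->
  let T := (coset K @*^-1 'O_q(K' / K))%G in
  [/\ M \subset T, T \subset K', T <| G & T / K = 'O_q(K' / K)].
Proof.
move=> nKG nMG nK'G sKM sMK' qMK T.
have nKK' : K <| K'.
  by rewrite /normal (subset_trans sKM sMK') (subset_trans (normal_sub nK'G)) ?normal_norm.
split.
- rewrite -sub_quotient_pre ?(subset_trans (normal_sub nMG)) ?normal_norm //.
  apply: pcore_max => //; rewrite /normal quotientS //=.
  by rewrite (subset_trans (quotientS K (normal_sub nK'G))) ?quotient_norms ?normal_norm.
- by apply: subset_trans (morphpreS _ (pcore_sub _ _)) _; rewrite (quotientGK nKK').
- rewrite -(quotientGK nKG) cosetpre_normal.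
  exact: char_normal_trans (pcore_char _ _) (quotient_normal K nK'G).
- exact: cosetpreK.
Qed.

Section LayerStep.
Variables (X : finType) (G : {group {perm X}}) (x0 : X).
Hypotheses (transG : [transitive G, on [set: X] | 'P]) (solG : solvable G)
  (sqfree : forall r, prime r -> ~~ (r ^ 2 %| #|X|)).

Definition block_closed (K : {group {perm X}}) (d : nat) :=
  [/\ K <| G, block_kernel G K = K & forall x, #|porb K x| = d].

Definition series_step (q : nat) (K0 T1 K1 : {group {perm X}}) :=
  [/\ [/\ K0 \subset T1, T1 \subset K1 & T1 <| G],
      [/\ forall m0, #|porbs K1| = m0 ->
            exists L : {group gpower (holomorph q) m0}, K1 / K0 \isog L,
          q %| #|K1 / K0| & q.-Sylow(K1 / K0) (T1 / K0)]
    & block_kernel G T1 = K1].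

(* Since |X| is square-free, a minimal normal q-layer M/K above a
   block-closed K glues exactly q K-orbits into each M-orbit. *)
Lemma layer_card_prime (K M : {group {perm X}}) q d : block_closed K d ->
  prime q -> M <| G -> K \subset M -> q.-group (M / K) -> ~~ (M \subset K) ->
  (forall x, #|layer K M x| = q) /\ ~~ (q %| d).
Proof.
move=> [nKG kerK card_K] q_pr nMG sKM qMK ntMK.
have nKM : M \subset 'N(K) := subset_trans (normal_sub nMG) (normal_norm nKG).
have d_gt0 : 0 < d by rewrite -(card_K x0) card_gt0; apply/set0Pn; exists x0; exact: porb_refl.
have card_M := card_porb_layer sKM nKM card_K.
have layer_const x : #|layer K M x| = #|layer K M x0|.
  apply/eqP; rewrite -(eqn_pmul2r d_gt0) -!card_M.
  by rewrite (card_porb_const transG x0 x (normal_norm nMG)).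
have [k card_MK] : {k | #|M / K| = (q ^ k)%N} by apply: p_natP.
have [a _ card_L] : exists2 a, a <= k & #|layer K M x0| = (q ^ a)%N.
  by apply/dvdn_pfactor => //; rewrite -card_MK card_quotient // card_layer_dvd.
have a_gt0 : 0 < a.
  rewrite lt0n; apply: contra ntMK => /eqP a0; rewrite -kerK block_kernelE.
  apply/subsetP => m Mm; rewrite inE (subsetP (normal_sub nMG)) //=.
  apply/forallP => y; suff -> : porb K y = porb M y by rewrite porb_fix.
  apply/eqP; rewrite eqEcard card_M layer_const card_L a0 mul1n card_K leqnn andbT.
  by apply/subsetP => z /imsetP[h Kh ->]; apply/imsetP; exists h; rewrite ?(subsetP sKM).
have dvd_X : (d * q ^ a %| #|X|)%N.
  by rewrite -(card_porbs transG x0 (normal_norm nMG)) card_M card_L mulnC dvdn_mull.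
have /negP nq2 := sqfree q_pr.
have a1 : a = 1%N.
  apply/eqP; rewrite eqn_leq a_gt0 andbT leqNgt; apply/negP => a_gt1.
  by apply: nq2; rewrite (dvdn_trans _ dvd_X) // dvdn_mull // dvdn_Pexp2l // prime_gt1.
split=> [x|]; first by rewrite layer_const card_L a1.
apply/negP => q_d; apply: nq2; rewrite (dvdn_trans _ dvd_X) //.
by rewrite a1 expn1 -mulnn dvdn_mul.
Qed.

Lemma next_series_step (K : {group {perm X}}) d : block_closed K d -> K :!=: G ->
  exists q (T K' : {group {perm X}}),
    [/\ prime q, ~~ (q %| d), block_closed K' (d * q) & series_step q K T K'].
Proof.
move=> closedK neKG; have [nKG kerK card_K] := closedK.
have [q [M [[q_pr nMG sKM derM qMK] ntMK]]] := minimal_abelian_layer solG nKG neKG.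
have [card_layer ndq] := layer_card_prime closedK q_pr nMG sKM qMK ntMK.
have nKM : M \subset 'N(K) := subset_trans (normal_sub nMG) (normal_norm nKG).
pose K' := block_kernel_group G M.
have sMK' : M \subset K' := sub_block_kernel (normal_sub nMG).
have nK'G : K' <| G := block_kernel_normal (normal_norm nMG).
have [sMT sTK' nTG TK] := pcore_preimage (q := q) nKG nMG nK'G sKM sMK' qMK.
have embed m0 : #|porbs M| = m0 ->
    exists g : {morphism K' / K >-> gpower (holomorph q) m0}, 'injm g.
  move=> card_M.
  have [F kerF] := layer_embedding nKG kerK nMG sKM derM q_pr card_layer card_M.
  exact: quotient_injm kerF.
exists q, (coset K @*^-1 'O_q(K' / K))%G, K'; split => //.
  split=> // [|x]; first exact: block_kernel_between sMK' (subxx _).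
  by rewrite (porb_between x sMK' (subxx _)) (card_porb_layer sKM nKM card_K) card_layer mulnC.
split; first by split=> //; exact: subset_trans sKM sMT.
- split.
  + move=> m0; rewrite (porbs_between sMK' (subxx _)) => /embed[g inj_g].
    by exists (g @* (K' / K))%G; apply: sub_isog.
  + have ntMK' : M / K != 1 by rewrite -subG1 quotient_sub1.
    have [_ q_dvd _] := pgroup_pdiv qMK ntMK'.
    exact: dvdn_trans q_dvd (cardSg (quotientS K sMK')).
  + have [g inj_g] := embed _ (erefl _).
    rewrite TK -(injm_pHall inj_g) ?pcore_sub // injm_pcore //.
    exact: gpower_pcore_Sylow.
- exact: block_kernel_between sMT sTK'.
Qed.

End LayerStep.

Lemma prod_take_nth (T : Type) (x0 : T) (s : seq T) (F : T -> nat) i :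
  i <= size s -> (\prod_(k <- take i s) F k = \prod_(j < i) F (nth x0 s j))%N.
Proof.
move=> le_i_s; rewrite (big_nth x0) size_takel // big_mkord.
by apply: eq_bigr => j _; rewrite nth_take.
Qed.

Lemma block_closed_full (X : finType) (G H : {group {perm X}}) :
  block_closed G H #|X| -> H :=: G.
Proof.
case=> nHG kerH card_H; apply/eqP; rewrite eqEsubset normal_sub //=.
suff : G \subset block_kernel G H by rewrite kerH.
rewrite block_kernelE; apply/subsetP => g Gg; rewrite inE Gg; apply/forallP => x.
have porbT y : porb H y = [set: X] by apply/eqP; rewrite eqEcard subsetT cardsT card_H leqnn.
by rewrite porbT eqEcard subsetT card_pimage leqnn.
Qed.

Lemma block_closed1 (X : finType) (G : {group {perm X}}) : block_closed G 1 1.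
Proof.
have porb1 x : porb 1 x = [set x] by rewrite /porb imset_set1 perm1.
split=> [|| x]; first exact: normal1; last by rewrite porb1 cards1.
apply/trivgP; rewrite /= block_kernelE; apply/subsetP => g /setIdP[_ /forallP fix_g].
apply/set1P/permP => x; move: (fix_g x); rewrite porb1 /pimage imset_set1.
by rewrite perm1 => /eqP /set1_inj.
Qed.

Section Series.
Variables (n : nat) (p : 'I_n -> nat) (X : finType) (G : {group {perm X}}) (x0 : X).
Hypotheses (p_prime : forall i, prime (p i)) (p_inj : injective p)
  (cardX : #|X| = (\prod_(i < n) p i)%N)
  (solG : solvable G) (transG : [transitive G, on [set: X] | 'P]).

Definition partial_series (i : nat) :=
  exists (s : seq 'I_n) (K T : nat -> {group {perm X}}),
  [/\ size s = i, uniq s, K 0%N :=: 1,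
      forall j, j <= i -> block_closed G (K j) (\prod_(k <- take j s) p k)
    & forall j k, onth s j = Some k -> series_step G (p k) (K j) (T j.+1) (K j.+1)].

Lemma partial_series0 : partial_series 0.
Proof.
exists [::], (fun _ => 1%G), (fun _ => 1%G); split=> // [j|j k]; last by rewrite onth0n.
by rewrite leqn0 => /eqP ->; rewrite big_nil; apply: block_closed1.
Qed.

Lemma sqfree_X r : prime r -> ~~ (r ^ 2 %| #|X|)%N.
Proof. by rewrite cardX; apply: sqfree_prod_primes. Qed.

Lemma fresh_prime (s : seq 'I_n) (K : {group {perm X}}) q :
  prime q -> ~~ (q %| \prod_(k <- s) p k) ->
  block_closed G K (\prod_(k <- s) p k * q) -> exists2 k, q = p k & k \notin s.
Proof.
move=> q_pr ndq [nKG _ card_K].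
have q_dvd : (q %| \prod_(k < n) p k)%N.
  rewrite -cardX -(card_porbs transG x0 (normal_norm nKG)) card_K.
  by rewrite dvdn_mull // dvdn_mull.
have [k q_pk] := prime_dvd_prod_primes p_prime q_pr q_dvd; exists k => //.
by apply: contra ndq => k_s; rewrite q_pk (big_rem k k_s) dvdn_mulr.
Qed.

(* Extension step: while i < n, K_i is proper (its orbits are smaller than X),
   so next_series_step adds a layer for a fresh prime. *)
Lemma partial_seriesS i : i < n -> partial_series i -> partial_series i.+1.
Proof.
move=> lt_i_n [s [K [T [size_s uniq_s K0 closedK stepK]]]].
have closed_i := closedK i (leqnn i); rewrite take_oversize ?size_s // in closed_i.
have neKG : K i :!=: G.
  apply/negP => /eqP eKG; have [_ _ card_K] := closed_i.
  have := prod_uniq_lt p_prime uniq_s; rewrite size_s -(card_K x0) eKG -cardX.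
  by rewrite porbE (atransP transG) ?inE // cardsT ltnn => /(_ lt_i_n).
have [q [T' [K' [q_pr ndq closedK' stepK']]]] :=
  next_series_step x0 transG solG sqfree_X closed_i neKG.
have [k q_pk k_s] := fresh_prime q_pr ndq closedK'.
exists (rcons s k), (fun j => if j == i.+1 then K' else K j),
  (fun j => if j == i.+1 then T' else T j); split=> //.
- by rewrite size_rcons size_s.
- by rewrite rcons_uniq k_s.
- move=> j; rewrite leq_eqVlt ltnS => /predU1P[->|le_j_i].
    by rewrite eqxx take_oversize ?size_rcons ?size_s // big_rcons -q_pk.
  rewrite ltn_eqF ?ltnS // -cats1 takel_cat ?size_s //.
  exact: closedK.
- move=> j k'; rewrite -cats1 onth_cat size_s.
  case: ltnP => [lt_j_i s_j | le_i_j /onth1P[/eqP j_i <-]].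
    have lt_j_Si : j < i.+1 := ltnW lt_j_i.
    by rewrite eqSS !ltn_eqF //; apply: stepK.
  have -> : j = i by apply/eqP; rewrite eqn_leq le_i_j -subn_eq0 j_i.
  by rewrite eqxx ltn_eqF // -q_pk.
Qed.

Lemma full_series : partial_series n.
Proof.
suff : forall i, i <= n -> partial_series i by apply.
elim=> [_|i IH lt_i_n]; first exact: partial_series0.
exact: partial_seriesS lt_i_n (IH (ltnW lt_i_n)).
Qed.

End Series.

Lemma nth_perm_inj n (s : seq 'I_n) :
  uniq s -> size s = n -> injective (fun j : 'I_n => nth j s j).
Proof.
move=> uniq_s size_s j1 j2 /= e; apply/val_inj/eqP.
by rewrite -(nth_uniq j1 _ _ uniq_s) ?size_s ?ltn_ord //= e (set_nth_default j1) ?size_s.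
Qed.

Lemma onth_ord n (s : seq 'I_n) (i : 'I_n) :
  size s = n -> onth s i = Some (nth i s i).
Proof. by move=> size_s; rewrite onthE (nth_map i) ?size_s. Qed.

Lemma prod_prefix n (s : seq 'I_n) (F : 'I_n -> nat) (i : 'I_n) : size s = n ->
  (\prod_(j < n | j <= i) F (nth j s j) = \prod_(k <- take i.+1 s) F k)%N.
Proof.
move=> size_s; rewrite (prod_take_nth i) ?size_s //.
rewrite (big_ord_widen n (fun j => F (nth i s j)) (ltn_ord i)).
by apply: eq_bigr => j _; rewrite (set_nth_default i) ?size_s.
Qed.

Lemma card_porbs_closed (X : finType) (G H : {group {perm X}}) (x0 : X) d :
  [transitive G, on [set: X] | 'P] -> block_closed G H d -> #|porbs H| = #|X| %/ d.
Proof.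
move=> transG [nHG _ card_H]; have d_gt0 : 0 < d.
  by rewrite -(card_H x0) card_gt0; apply/set0Pn; exists x0; apply: porb_refl.
by rewrite -(card_porbs transG x0 (normal_norm nHG)) card_H mulnK.
Qed.

Theorem theorem3p6 (n : nat) (p : 'I_n -> nat)
    (p_prime : forall i, prime (p i)) (p_inj : injective p)
    (X : finType) (cardX : #|X| = (\prod_(i < n) p i)%N)
    (G : {group {perm X}})
    (solG : solvable G) (transG : [transitive G, on [set: X] | 'P]) :
  exists (sigma : {perm 'I_n}) (K T : nat -> {group {perm X}}),
    [/\ K 0%N :=: 1, K n :=: G,
        forall i : nat, (i <= n)%N -> K i <| G,
        forall i : nat, (1 <= i <= n)%N -> T i <| G
      & forall i : 'I_n,
        let q := p (sigma i) in
        let m := ((\prod_(j < n) p j) %/ (\prod_(j < n | (j <= i)%N) p (sigma j)))%N in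
        [/\ K i \subset T i.+1 /\ T i.+1 \subset K i.+1,
            (* (i) *)
            [/\ exists L : {group gpower (holomorph q) m}, (K i.+1 / K i) \isog L,
                q %| #|K i.+1 / K i|
              & q.-Sylow(K i.+1 / K i) (T i.+1 / K i)],
            (* (ii) *)
            K i.+1 :=: [set g in G | [forall x, pimage g (porb (T i.+1) x)
                                              == porb (T i.+1) x]]
          & (* (iii) *)
            (system_of_imprimitivity G (porbs (K i.+1)) /\
             #|porbs (K i.+1)| = m)]].
Proof.
have /card_gt0P[x0 _] : (0 < #|X|)%N by rewrite cardX prodn_gt0 // => k; apply: prime_gt0.
have [s [K [T [size_s uniq_s K0 closedK stepK]]]] :=
  full_series x0 p_prime p_inj cardX solG transG.
pose sigma := perm (nth_perm_inj uniq_s size_s).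
have s_sigma (i : 'I_n) : onth s i = Some (sigma i) by rewrite permE onth_ord.
exists sigma, K, T; split=> //.
- apply: block_closed_full; rewrite cardX -(prod_uniq_full p uniq_s size_s).
  by rewrite -{1}(take_size s) size_s; apply: closedK.
- by move=> i /closedK[].
- case=> // i /andP[_ lt_i_n].
  by have [[_ _ ->]] := stepK _ _ (s_sigma (Ordinal lt_i_n)).
move=> i q m; have [[sKT sTK _] [embed q_dvd sylow] kerT] := stepK _ _ (s_sigma i).
have closed_Si := closedK i.+1 (ltn_ord i); have [nKG _ _] := closed_Si.
have card_m : #|porbs (K i.+1)| = m.
  rewrite (card_porbs_closed x0 transG closed_Si) cardX /m.
  rewrite -(prod_prefix (fun k => p k) i size_s); congr (_ %/ _).
  by apply: eq_bigr => j _; rewrite permE.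
split=> //; first by split=> //; apply: embed.
- by rewrite -block_kernelE kerT.
- by split=> //; apply: porbs_imprimitivity (normal_norm nKG).
Qed.
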